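(* In the parallel-links routing game with homogeneous costs described in the context, let $\alpha^i>0$ ($i\in\mathcal N$) be weights with $\sum_i\alpha^i=1$, and consider the weighted social cost $J^{\alpha}_{sys}(\mathbf f)=\sum_i\alpha^i\sum_lf^i_lT_l(f_l)$. Let $PoS$ be the ratio of the weighted social cost of the NBS, $\sum_i\alpha^i\tilde g^i$, to the minimum of $J^\alpha_{sys}$ over feasible profiles, and let $\overline{PoS}=(\sum_i\tilde g^i)/J^*_{sys}$ be the Price of Selfishness for the unweighted social cost. Then $$\frac{\min_i\alpha^i}{\max_i\alpha^i}\,\overline{PoS}\ \le\ PoS\ \le\ \frac{\max_i\alpha^i}{\min_i\alpha^i}\,\overline{PoS}.$$
   Context: Parallel-links routing game: users $\mathcal N=\{1,\dots,N\}$ share parallel links $\mathcal L=\{1,\dots,L\}$ from a common source to a common destination; link $l$ has capacity $c_l$. User $i$ has demand $r^i>0$, $R=\sum_ir^i<\sum_lc_l$. A routing strategy of user $i$ is $\mathbf f^i=(f^i_l)_l$ with $f^i_l\ge0$, $\sum_lf^i_l=r^i$; feasible profiles form $\mathbf F$; $f_l=\sum_if^i_l$. Homogeneous costs: $J^i(\mathbf f)=\sum_lf^i_lT_l(f_l)$, each $T_l:[0,\infty)\to[0,\infty)$ strictly increasing, convex, continuously differentiable, with $T_l(f_l)=T(c_l-f_l)$ for $f_l<c_l$ and $T_l(f_l)=\infty$ for $f_l\ge c_l$, for a single link-independent function $T$ with $T(c_l-f_l)$ strictly increasing in $f_l$. NEP: the unique feasible $\hat{\mathbf f}$ in which each user's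 strategy minimizes its cost given the others'; $\hat J^i=J^i(\hat{\mathbf f})$. Unweighted social cost $J_{sys}=\sum_iJ^i=\sum_lf_lT_l(f_l)$, minimum $J^*_{sys}$. Bargaining: $\mathcal G$ is the set of all vectors $\sum_{m=1}^Mp_m(J^1(\mathbf f(m)),\dots,J^N(\mathbf f(m)))$ with $M$ finite, $p_m>0$, $\sum p_m=1$, $\mathbf f(m)\in\mathbf F$; the NBS is the unique $\tilde{\mathbf g}$ maximizing $\prod_i(\hat J^i-g^i)$ over $\mathbf g\in\mathcal G$ with $g^i\le\hat J^i$ for all $i$. *)

From HB Require Import structures.
From mathcomp Require Import all_boot all_order all_algebra.
From mathcomp Require Import all_classical all_reals all_analysis.
Set Implicit Arguments. Unset Strict Implicit. Unset Printing Implicit Defensive.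
Import Order.TTheory GRing.Theory Num.Theory.
Import numFieldNormedType.Exports.
Local Open Scope ring_scope.

Section Routing.
Variables (R : realType) (N L : nat).

(* a routing profile: f i l = flow of user i on link l *)
Definition profile := 'I_N -> 'I_L -> R.

Definition flow (f : profile) (l : 'I_L) : R := \sum_(i < N) f i l.

Definition strategy_ok (r : 'I_N -> R) (i : 'I_N) (g : 'I_L -> R) : Prop :=
  (forall l, 0 <= g l) /\ \sum_(l < L) g l = r i.

Definition feasible (r : 'I_N -> R) (f : profile) : Prop :=
  forall i, strategy_ok r i (f i).

Definition Tlink (c : 'I_L -> R) (T : R -> R) (l : 'I_L) (x : R) : \bar R :=
  if x < c l then (T (c l - x))%:E else +oo%E.

(* cost of user i: J^i(f) = sum_l f^i_l T_l(f_l)  (with 0 * +oo = 0) *)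
Definition cost (c : 'I_L -> R) (T : R -> R) (f : profile) (i : 'I_N) : \bar R :=
  (\sum_(l < L) ((f i l)%:E * Tlink c T l (flow f l)))%E.

Definition Jsys c T (f : profile) : \bar R := (\sum_(i < N) cost c T f i)%E.

Definition Jsys_w (alpha : 'I_N -> R) c T (f : profile) : \bar R :=
  (\sum_(i < N) (alpha i)%:E * cost c T f i)%E.

Definition update (f : profile) (i : 'I_N) (g : 'I_L -> R) : profile :=
  fun j => if j == i then g else f j.

Definition is_NEP r c T (fh : profile) : Prop :=
  feasible r fh /\
  forall i g, strategy_ok r i g -> (cost c T fh i <= cost c T (update fh i g) i)%E.

Definition in_G r c T (g : 'I_N -> \bar R) : Prop :=
  exists (M : nat) (p : 'I_M -> R) (fm : 'I_M -> profile),
    (forall m, 0 < p m) /\ \sum_(m < M) p m = 1 /\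
    (forall m, feasible r (fm m)) /\
    forall i, g i = (\sum_(m < M) (p m)%:E * cost c T (fm m) i)%E.

Definition is_NBS r c T (Jh : 'I_N -> \bar R) (gt : 'I_N -> \bar R) : Prop :=
  in_G r c T gt /\ (forall i, (gt i <= Jh i)%E) /\
  forall g, in_G r c T g -> (forall i, (g i <= Jh i)%E) ->
    (\prod_(i < N) (Jh i - g i) <= \prod_(i < N) (Jh i - gt i))%E.

Definition is_minimizer r (J : profile -> \bar R) (fs : profile) : Prop :=
  feasible r fs /\ forall f, feasible r f -> (J fs <= J f)%E.

Definition is_min_of (a : 'I_N -> R) (m : R) : Prop :=
  (exists i, a i = m) /\ forall i, m <= a i.
Definition is_max_of (a : 'I_N -> R) (m : R) : Prop :=
  (exists i, a i = m) /\ forall i, a i <= m.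

Definition homogeneous_cost (c : 'I_L -> R) (T : R -> R) : Prop :=
  forall l : 'I_L,
    (forall x, 0 <= x -> x < c l -> 0 <= T (c l - x)) /\
    (forall x y, 0 <= x -> x < y -> y < c l -> T (c l - x) < T (c l - y)) /\
    (forall x y t, 0 <= x -> x < c l -> 0 <= y -> y < c l -> 0 <= t -> t <= 1 ->
       T (c l - (t * x + (1 - t) * y)) <= t * T (c l - x) + (1 - t) * T (c l - y)) /\
    (forall x, 0 <= x -> x < c l ->
       derivable (fun u : R => T (c l - u)) x 1 /\
       {for x, continuous (derive1 (fun u : R => T (c l - u)))}).

End Routing.

From HB Require Import structures.
From mathcomp Require Import all_boot all_order all_algebra.
From mathcomp Require Import all_classical all_reals all_analysis.
From mathcomp Require Import ring.
Set Implicit Arguments. Unset Strict Implicit. Unset Printing Implicit Defensive.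
Import Order.TTheory GRing.Theory Num.Theory.
Local Open Scope ring_scope.

(* Every weight lies in
   [amin, amax], so a weighted sum of nonnegative costs is squeezed between
   amin and amax times the plain sum.  For the NBS costs this sandwiches the
   numerator of PoS around that of PoSbar; for the optimal profiles it
   sandwiches min J^alpha_sys between amin J*_sys and amax J*_sys.  Dividing
   the two sandwiches gives the bounds. *)

Section Costs.
Variables (R : realType) (N L : nat) (c : 'I_L -> R) (r : 'I_N -> R) (T : R -> R).
Hypothesis T_ge0 : forall l x, 0 <= x -> x < c l -> 0 <= T (c l - x).

Lemma cost_ge0 (f : profile R N L) i : feasible r f -> (0 <= cost c T f i)%E.
Proof.
move=> hf; apply: sume_ge0 => l _; apply: mule_ge0.
  by rewrite lee_fin; case: (hf i) => + _; apply.
rewrite /Tlink; case: ifP => // lt_fc; rewrite lee_fin; apply: T_ge0 => //.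
by apply: sumr_ge0 => j _; case: (hf j) => + _; apply.
Qed.

Lemma in_G_ge0 (g : 'I_N -> \bar R) i : in_G r c T g -> (0 <= g i)%E.
Proof.
move=> [M [p [fm [p_gt0 [_ [fm_ok ->]]]]]]; apply: sume_ge0 => m _.
by apply: mule_ge0; [rewrite lee_fin ltW | exact: cost_ge0].
Qed.

End Costs.

Section WeightedSums.
Variables (R : realType) (N : nat) (alpha : 'I_N -> R) (amin amax : R).
Hypothesis amin_le : forall i, amin <= alpha i.
Hypothesis le_amax : forall i, alpha i <= amax.

Lemma ge0_wsum_ge_min (x : 'I_N -> \bar R) : (forall i, 0 <= x i)%E ->
  (amin%:E * \sum_(i < N) x i <= \sum_(i < N) (alpha i)%:E * x i)%E.
Proof.
by move=> x_ge0; rewrite ge0_sume_distrr //; apply: lee_sum => i _;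
  apply: lee_wpmul2r; rewrite ?lee_fin.
Qed.

Lemma ge0_wsum_le_max (x : 'I_N -> \bar R) : (forall i, 0 <= x i)%E ->
  (\sum_(i < N) (alpha i)%:E * x i <= amax%:E * \sum_(i < N) x i)%E.
Proof.
by move=> x_ge0; rewrite ge0_sume_distrr //; apply: lee_sum => i _;
  apply: lee_wpmul2r; rewrite ?lee_fin.
Qed.

Lemma min_Jsys_w_bounds (L : nat) (c : 'I_L -> R) (r : 'I_N -> R) (T : R -> R)
    (fs fa : profile R N L) :
  (forall l x, 0 <= x -> x < c l -> 0 <= T (c l - x)) -> 0 <= amin ->
  is_minimizer r (Jsys c T) fs -> is_minimizer r (Jsys_w alpha c T) fa ->
  (amin%:E * Jsys c T fs <= Jsys_w alpha c T fa)%E /\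
  (Jsys_w alpha c T fa <= amax%:E * Jsys c T fs)%E.
Proof.
move=> T_ge0 amin_ge0 [fs_ok fs_min] [fa_ok fa_min]; split.
  apply: le_trans (ge0_wsum_ge_min (fun i => cost_ge0 T_ge0 i fa_ok)).
  by apply: lee_wpmul2l; [rewrite lee_fin | exact: fs_min].
exact: le_trans (fa_min _ fs_ok) (ge0_wsum_le_max (fun i => cost_ge0 T_ge0 i fs_ok)).
Qed.

End WeightedSums.

(* If X = +oo then Y = +oo as well, and both [fine] values are the junk value 0. *)
Lemma fine_sandwich (R : realType) (a b : R) (X Y : \bar R) :
  0 < a -> (0 <= X)%E -> (a%:E * X <= Y)%E -> (Y <= b%:E * X)%E ->
  [/\ 0 <= fine X, a * fine X <= fine Y & fine Y <= b * fine X].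
Proof.
move=> a_gt0; case: X => [x| |] //.
  by rewrite lee_fin => x_ge0; case: Y => [y| |] //=; rewrite -!EFinM lee_fin.
move=> _; rewrite gt0_muley ?lte_fin // => + _.
by rewrite leye_eq => /eqP ->; rewrite /= !mulr0.
Qed.

Lemma ratio_sandwich (R : realFieldType) (a b g u s w : R) :
  0 < a -> a <= b -> 0 <= g -> a * g <= u -> u <= b * g ->
  0 <= s -> a * s <= w -> w <= b * s ->
  a / b * (g / s) <= u / w /\ u / w <= b / a * (g / s).
Proof.
move=> a_gt0 le_ab g_ge0 ag_le le_bg s_ge0 as_le le_bs.
have b_gt0 : 0 < b by apply: lt_le_trans le_ab.
have [s0 | s_neq0] := eqVneq s 0.
  move: as_le le_bs; rewrite s0 !mulr0 => w_ge0 w_le0.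
  have -> : w = 0 by apply/eqP; rewrite eq_le w_le0 w_ge0.
  by rewrite !invr0 !mulr0.
have s_gt0 : 0 < s by rewrite lt_def s_neq0.
have w_gt0 : 0 < w by apply: lt_le_trans as_le; rewrite mulr_gt0.
have -> : a / b * (g / s) = (a * g) / (b * s) by rewrite invfM; field; rewrite ?gt_eqF.
have -> : b / a * (g / s) = (b * g) / (a * s) by rewrite invfM; field; rewrite ?gt_eqF.
have inv_bs : (b * s)^-1 <= w^-1 by rewrite lef_pV2 ?posrE ?mulr_gt0.
have inv_as : w^-1 <= (a * s)^-1 by rewrite lef_pV2 ?posrE ?mulr_gt0.
split; apply: ler_pM => //.
- exact: mulr_ge0 (ltW a_gt0) g_ge0.
- by rewrite invr_ge0 ltW // mulr_gt0.
- exact: le_trans (mulr_ge0 (ltW a_gt0) g_ge0) ag_le.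
- by rewrite invr_ge0 ltW.
Qed.

Theorem proposition3p2 (R : realType) (N L : nat)
  (c : 'I_L -> R) (r : 'I_N -> R) (T : R -> R) (alpha : 'I_N -> R)
  (fh : profile R N L) (gt : 'I_N -> \bar R) (fs fa : profile R N L)
  (amin amax : R) :
  (forall l, 0 < c l) ->
  (forall i, 0 < r i) ->
  \sum_(i < N) r i < \sum_(l < L) c l ->
  homogeneous_cost c T ->
  (forall i, 0 < alpha i) -> \sum_(i < N) alpha i = 1 ->
  is_NEP r c T fh ->
  is_NBS r c T (cost c T fh) gt ->
  is_minimizer r (Jsys c T) fs ->
  is_minimizer r (Jsys_w alpha c T) fa ->
  is_min_of alpha amin -> is_max_of alpha amax ->
  let PoS := fine (\sum_(i < N) (alpha i)%:E * gt i)%E / fine (Jsys_w alpha c T fa) in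
  let PoSbar := fine (\sum_(i < N) gt i)%E / fine (Jsys c T fs) in
  amin / amax * PoSbar <= PoS /\ PoS <= amax / amin * PoSbar.
Proof.
move=> _ _ _ hT alpha_gt0 _ _ [gt_G _] fs_min fa_min
  [[i0 <-] amin_le] [[_ _] le_amax] PoS PoSbar.
have T_ge0 : forall l x, 0 <= x -> x < c l -> 0 <= T (c l - x).
  by move=> l; case: (hT l).
have gt_ge0 i : (0 <= gt i)%E by exact: in_G_ge0 T_ge0 _ _ gt_G.
have Jfs_ge0 : (0 <= Jsys c T fs)%E.
  by apply: sume_ge0 => i _; case: fs_min => fs_ok _; exact: cost_ge0 T_ge0 _ _ fs_ok.
have [Jfa_lo Jfa_hi] :=
  min_Jsys_w_bounds amin_le le_amax T_ge0 (ltW (alpha_gt0 i0)) fs_min fa_min.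
have [g_ge0 g_lo g_hi] := fine_sandwich (alpha_gt0 i0) (sume_ge0 (fun i _ => gt_ge0 i) _)
  (ge0_wsum_ge_min amin_le gt_ge0) (ge0_wsum_le_max le_amax gt_ge0).
have [s_ge0 s_lo s_hi] := fine_sandwich (alpha_gt0 i0) Jfs_ge0 Jfa_lo Jfa_hi.
rewrite /PoS /PoSbar.
exact: ratio_sandwich (alpha_gt0 i0) (le_amax i0) g_ge0 g_lo g_hi s_ge0 s_lo s_hi.
Qed.
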